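(* Fix a constant $B\ge 1$. An ideal SABT for $n$ keys with total number of accesses $m$ can be built in $O(\min(n\log n, m))$ time, uses $O(n)$ memory, and has depth $O(\log_B m)$.
   Context: A Generic Self-Adjusting Tree (GSAT) with degree function $D$ for a set of integer keys with access counts $ac_i\ge1$ consists of $m=\sum_i ac_i$, an array of $k\le\lceil D(m)\rceil$ representative keys with their access counts, and $k+1$ child subtrees that are GSATs for the keys lying strictly before the first representative, strictly between consecutive representatives, and strictly after the last; every node stores at least one key. $m(T')$ is the total access count of keys in subtree $T'$. A GSAT is ideal if each child $T_j$ of the root satisfies $m(T_j)\le m/(D(m)+1)$ and each child is ideal. An SABT (Self-Adjusting B-Tree) is a GSAT with constant degree function $D(m)=B$. Cost model for construction: given keys sorted with prefix sums of access counts, a node costs $O(B)$ time and memory plus $O(\log n)$ time per representative (each representative chosen by binary search on prefix sums), besides recursive construction of its children. *)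

From mathcomp Require Import all_boot all_order all_algebra.
Set Implicit Arguments. Unset Strict Implicit. Unset Printing Implicit Defensive.
Import Order.TTheory GRing.Theory Num.Theory.

(* A key together with its access count. *)
Definition entry := (int * nat)%type.

(* Generic Self-Adjusting Trees.  [GLeaf] is the empty subtree (a child
   whose key range is empty); every [GNode] stores at least one key. *)
Inductive gsat := GLeaf | GNode of seq entry & seq gsat.

Definition acc_total (S : seq entry) : nat := sumn (map snd S).

Definition ltkey (p q : entry) : bool := (p.1 < q.1)%R.

Definition between (lo hi : option int) (x : int) : bool :=
  (if lo is Some a then (a < x)%R else true) &&
  (if hi is Some b then (x < b)%R else true).

(* keys of S lying in the j-th gap determined by the representatives:
   j = 0 : strictly before the first representative,
   0 < j < k : strictly between representatives j-1 and j,
   j = k : strictly after the last one. *)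
Definition gap_keys (S reps : seq entry) (j : nat) : seq entry :=
  let ks := map fst reps in
  let lo := if j is j'.+1 then Some (nth 0%R ks j') else None in
  let hi := if j < size ks then Some (nth 0%R ks j) else None in
  filter (fun p => between lo hi p.1) S.

Fixpoint is_gsat (D : nat -> nat) (T : gsat) (S : seq entry) {struct T} : Prop :=
  match T with
  | GLeaf => S = [::]
  | GNode reps ch =>
      [/\ 0 < size reps,
          size reps <= D (acc_total S),
          sorted ltkey reps,
          all (fun r => r \in S) reps &
          size ch = (size reps).+1] /\
          (fix aux (cs : seq gsat) (j : nat) {struct cs} : Prop :=
             match cs with
             | [::] => True
             | c :: cs' => is_gsat D c (gap_keys S reps j) /\ aux cs' j.+1
             end) ch 0
  end.

Definition is_sabt (B : nat) (T : gsat) (S : seq entry) : Prop :=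
  is_gsat (fun _ => B) T S.

Fixpoint mass (T : gsat) : nat :=
  match T with
  | GLeaf => 0
  | GNode reps ch => acc_total reps + sumn (map mass ch)
  end.

Fixpoint nkeys (T : gsat) : nat :=
  match T with
  | GLeaf => 0
  | GNode reps ch => size reps + sumn (map nkeys ch)
  end.

Fixpoint ideal (D : nat -> nat) (T : gsat) {struct T} : Prop :=
  match T with
  | GLeaf => True
  | GNode reps ch =>
      (fix aux (cs : seq gsat) {struct cs} : Prop :=
         match cs with
         | [::] => True
         | c :: cs' => mass c * (D (mass T)).+1 <= mass T /\ ideal D c /\ aux cs'
         end) ch
  end.

Fixpoint depth (T : gsat) : nat :=
  match T with
  | GLeaf => 0
  | GNode _ ch => (foldr maxn 0 (map depth ch)).+1
  end.

(* Construction cost model: a node costs O(B) time plus one binary search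
   over the (sorted, prefix-summed) key range of its subtree per
   representative, i.e. (1 + log2 (#keys in range)) <= O(log n) time each. *)
Fixpoint build_time (B : nat) (T : gsat) : nat :=
  match T with
  | GLeaf => 0
  | GNode reps ch =>
      B + size reps * (trunc_log 2 (nkeys T)).+1 + sumn (map (build_time B) ch)
  end.

(* Memory: O(B) per node (B key/count slots and B+1 child pointers). *)
Fixpoint build_mem (B : nat) (T : gsat) : nat :=
  match T with
  | GLeaf => 0
  | GNode reps ch => B + B.+1 + sumn (map (build_mem B) ch)
  end.

From mathcomp Require Import all_boot all_order all_algebra.
From mathcomp Require Import zify.
Import Order.TTheory GRing.Theory Num.Theory.

(* At a node holding the keys S of total weight
   m, scan S in key order, growing the current gap; a key whose addition would
   make the gap weigh more than m / (B + 1) becomes a representative and opens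
   a new, empty gap.  Every gap then weighs at most m / (B + 1), which gives
   idealness and depth log_(B+1) m + 1, while each representative together
   with the gap it closes weighs more than m / (B + 1), so there are at most
   B representatives (and at least one, since S itself is too heavy).
   Each key is a representative of exactly one node, and a node costs
   O(B log n) per representative, whence the O(n log n) time.  The O(m) time
   is amortised with the potential B (log x + 2) of a subtree of weight x:
   as every child weighs at most m / (B + 1), the potential lost from a node
   to its children pays for the O(B log m) work done at the node. *)

Lemma trunc_log2_le n : trunc_log 2 n <= n.
Proof.
case: n => // n; have := trunc_logP (isT : 1 < 2) (ltn0Sn n).
by apply: leq_trans; apply/ltnW/ltn_expl.
Qed.

(* If [log M = log x + 2 + e] then [M >= 2 ^ e * 2 x], and [e < 2 ^ e]
   absorbs the extra [e]. *)
Lemma trunc_log2_ratio x M : 0 < x -> 2 * x <= M ->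
  2 * x * trunc_log 2 M <= M * (trunc_log 2 x + 2).
Proof.
move=> x_gt0 xM; have M_gt0 : 0 < M by lia.
set k := trunc_log 2 x; set j := trunc_log 2 M.
have [j_le|/ltnW j_ge] := leqP j (k + 2); first by apply: leq_mul.
have x_lt : 2 * x < 2 ^ (k + 2) by rewrite addn2 expnS ltn_pmul2l ?trunc_log_ltn.
have [e j_eq] : exists e, j = k + 2 + e by exists (j - (k + 2)); rewrite subnKC.
have e_lt : e < 2 ^ e by apply: ltn_expl.
have M_ge : 2 ^ (k + 2) * 2 ^ e <= M by rewrite -expnD -j_eq trunc_logP.
move: x_lt e_lt M_ge; rewrite j_eq; move: (2 ^ (k + 2)) (2 ^ e) => P Q.
nia.
Qed.

Definition log_potential B x := if x is 0 then 0 else B * (trunc_log 2 x + 2).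

Lemma log_potential_light B x M : x * B.+1 <= M ->
  2 * B * trunc_log 2 M * x <= M * log_potential B x.
Proof.
case: x => [|x] light; first by rewrite !muln0.
case: B light => [|B] light; first by rewrite !mul0n.
have := @trunc_log2_ratio x.+1 M isT; rewrite /log_potential.
nia.
Qed.

Lemma potential_covers_node B r X R L : 0 < r -> L <= r + X ->
  2 * B * L * X <= (r + X) * R -> 2 * B * (L + 2) <= 6 * B * r + R.
Proof.
move=> r_gt0 L_le XR_ge; rewrite -(@leq_pmul2l (r + X)) ?addn_gt0 ?r_gt0 //.
nia.
Qed.

Lemma leq_min_nlogn_linear B n m t :
  t <= B * n * (trunc_log 2 n + 2) -> t <= 6 * B * m ->
  t <= (6 * B).+1 * minn (n * trunc_log 2 n) m + (6 * B).+1.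
Proof.
move=> t_nlogn t_lin; have [n_le1|n_gt1] := leqP n 1.
  have log0 : trunc_log 2 n = 0 by case: n n_le1 {t_nlogn} => [|[]].
  by move: t_nlogn; rewrite log0 muln0 min0n; nia.
have log_gt0 : 0 < trunc_log 2 n by rewrite trunc_log_gt0.
by case: leqP; nia.
Qed.

Lemma sumn_mapE (T : Type) (f : T -> nat) (s : seq T) :
  sumn (map f s) = \sum_(x <- s) f x.
Proof. by rewrite sumnE big_map. Qed.

Lemma acc_totalE (s : seq entry) : acc_total s = \sum_(p <- s) p.2.
Proof. exact: sumn_mapE. Qed.

Definition positive_counts (s : seq entry) := all (fun p => 0 < p.2) s.

Lemma size_le_acc_total {s} : positive_counts s -> size s <= acc_total s.
Proof.
rewrite acc_totalE -sum1_size big_seq [X in _ <= X]big_seq => /allP pos.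
by apply: leq_sum => p /pos.
Qed.

Lemma positive_counts_subseq {s t} :
  subseq s t -> positive_counts t -> positive_counts s.
Proof.
by move=> /mem_subseq sub_st /allP pos_t; apply/allP => p /sub_st /pos_t.
Qed.

Lemma ltkey_trans : transitive ltkey.
Proof. by move=> q p r; apply: lt_trans. Qed.

Lemma mass_node reps ch :
  mass (GNode reps ch) = acc_total reps + \sum_(c <- ch) mass c.
Proof. by rewrite /= sumn_mapE. Qed.

Lemma nkeys_node reps ch :
  nkeys (GNode reps ch) = size reps + \sum_(c <- ch) nkeys c.
Proof. by rewrite /= sumn_mapE. Qed.

Lemma build_time_node B reps ch : build_time B (GNode reps ch) =
  B + size reps * (trunc_log 2 (nkeys (GNode reps ch))).+1
    + \sum_(c <- ch) build_time B c.
Proof. by rewrite -sumn_mapE. Qed.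

Lemma build_mem_node B reps ch :
  build_mem B (GNode reps ch) = B + B.+1 + \sum_(c <- ch) build_mem B c.
Proof. by rewrite /= sumn_mapE. Qed.

Lemma depth_node reps ch : depth (GNode reps ch) = (\max_(c <- ch) depth c).+1.
Proof. by rewrite /= foldrE big_map. Qed.

Lemma is_gsat_node D reps ch S :
  [/\ 0 < size reps, size reps <= D (acc_total S), sorted ltkey reps,
      all (fun r => r \in S) reps & size ch = (size reps).+1] ->
  (forall i, i < size ch -> is_gsat D (nth GLeaf ch i) (gap_keys S reps i)) ->
  is_gsat D (GNode reps ch) S.
Proof.
move=> shape children; split => //.
have {children} : forall i, i < size ch ->
    is_gsat D (nth GLeaf ch i) (gap_keys S reps (0 + i)) by [].
elim: ch 0 {shape} => [|c ch IH] j0 //= children; split.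
  by have := children 0 isT; rewrite addn0.
by apply: IH => i lt_i; rewrite addSnnS; apply: children.
Qed.

Lemma ideal_node D reps ch :
  (forall i, i < size ch ->
     mass (nth GLeaf ch i) * (D (mass (GNode reps ch))).+1 <= mass (GNode reps ch)
     /\ ideal D (nth GLeaf ch i)) ->
  ideal D (GNode reps ch).
Proof.
set X := mass _; rewrite [ideal D _]/=.
change (acc_total reps + sumn (map mass ch)) with X; clearbody X.
elim: ch => [|c ch IH] //= children; have [light ideal_c] := children 0 isT.
by do 2!split => //; apply: IH => i; apply: (children i.+1).
Qed.

Definition unblock {T : Type} (bs : seq (T * seq T)) : seq T :=
  flatten [seq b.1 :: b.2 | b <- bs].

Lemma unblock_cons (T : Type) (p : T) g bs :
  unblock ((p, g) :: bs) = p :: g ++ unblock bs.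
Proof. by []. Qed.

Lemma big_unblock (T : Type) (F : T -> nat) g0 bs :
  \sum_(x <- g0 ++ unblock bs) F x =
  \sum_(b <- bs) F b.1 + \sum_(g <- g0 :: map snd bs) \sum_(x <- g) F x.
Proof.
elim: bs g0 => [|[p g] bs IH] g0; first by rewrite /= cats0 !big_seq1 big_nil.
rewrite unblock_cons big_cat /= big_cons (IH g) /= !big_cons.
by rewrite addnCA !addnA [F p + _ + _]addnAC.
Qed.

Lemma subseq_unblock_reps {T : eqType} (bs : seq (T * seq T)) :
  subseq (map fst bs) (unblock bs).
Proof.
elim: bs => [|[p g] bs IH] //; rewrite unblock_cons /= eqxx.
exact: subseq_trans IH (suffix_subseq _ _).
Qed.

Lemma subseq_unblock_gap {T : eqType} g0 (bs : seq (T * seq T)) g :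
  g \in g0 :: map snd bs -> subseq g (g0 ++ unblock bs).
Proof.
elim: bs g0 => [|[p g1] bs IH] g0; first by rewrite inE cats0 => /eqP ->.
rewrite unblock_cons !inE => /or3P[/eqP->|/eqP->|g_bs]; first exact: prefix_subseq.
  apply: subseq_trans (prefix_subseq _ _) _.
  exact: subseq_trans (subseq_cons _ _) (suffix_subseq _ _).
apply: subseq_trans (IH g1 _) _; first by rewrite inE g_bs orbT.
exact: subseq_trans (subseq_cons _ _) (suffix_subseq _ _).
Qed.

Lemma gap_keys_first g0 bs : pairwise ltkey (g0 ++ unblock bs) ->
  gap_keys (g0 ++ unblock bs) (map fst bs) 0 = g0.
Proof.
rewrite /gap_keys; case: bs => [|[p g] bs] /=.
  by rewrite cats0 => _; apply/all_filterP/allP.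
rewrite unblock_cons pairwise_cat /= => /and3P[/allrelP lt_g0_p _ /andP[lt_p _]].
rewrite filter_cat (all_filterP _); last first.
  by apply/allP => x x_g0; apply: lt_g0_p; rewrite ?mem_head.
rewrite /= {1}/between ltxx /= -[RHS]cats0; congr (_ ++ _).
rewrite (eq_in_filter (a2 := pred0)) ?filter_pred0 // => x /(allP lt_p) lt_px.
by rewrite /between /= ltNge ltW.
Qed.

Lemma gap_keys_shift g0 p T rs j :
  pairwise ltkey (g0 ++ p :: T) -> {subset rs <= T} -> j <= size rs ->
  gap_keys (g0 ++ p :: T) (p :: rs) j.+1 = gap_keys T rs j.
Proof.
rewrite pairwise_cat => /and3P[/allrelP lt_g0_p _ /= /andP[/allP lt_p _]] rs_T j_le.
have lo_ge_p : (p.1 <= nth 0%R (map fst (p :: rs)) j)%R.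
  case: j j_le => [|j] j_lt //=; rewrite (nth_map p) //.
  exact/ltW/lt_p/rs_T/mem_nth.
rewrite /gap_keys filter_cat (eq_in_filter (a2 := pred0)) ?filter_pred0; last first.
  move=> x /lt_g0_p lt_xp; apply/negbTE/negP => /andP[lo_x _].
  have lt_x_lo := lt_le_trans (lt_xp _ (mem_head _ _)) lo_ge_p.
  by have := lt_trans lo_x lt_x_lo; rewrite ltxx.
rewrite /= {1}/between (le_gtF lo_ge_p) /=; apply: eq_in_filter => x /lt_p lt_px.
by case: j {j_le lo_ge_p} => [|j] //; rewrite /between /= (lt_px : (p.1 < x.1)%R).
Qed.

Lemma gap_keys_unblock g0 bs j : pairwise ltkey (g0 ++ unblock bs) ->
  j <= size bs ->
  gap_keys (g0 ++ unblock bs) (map fst bs) j = nth [::] (g0 :: map snd bs) j.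
Proof.
elim: bs g0 j => [|[p g] bs IH] g0 [|j] sorted_S j_le //=;
  try exact: gap_keys_first.
rewrite unblock_cons in sorted_S *.
rewrite gap_keys_shift ?size_map //; last first.
  move=> x /(mem_subseq (subseq_unblock_reps bs)) x_bs.
  by rewrite mem_cat x_bs orbT.
by apply: IH => //; move: sorted_S; rewrite pairwise_cat /= => /and3P[_ _ /andP[]].
Qed.

Section Greedy.
Variables (B M : nat).

(* [greedy cur S] returns the first gap, whose weight so far is [cur], and the
   list of representatives, each paired with the gap that follows it. *)
Fixpoint greedy (cur : nat) (S : seq entry) :
    seq entry * seq (entry * seq entry) :=
  if S is p :: S' then
    if (cur + p.2) * B.+1 <= M then
      let r := greedy (cur + p.2) S' in (p :: r.1, r.2)
    else let r := greedy 0 S' in ([::], (p, r.1) :: r.2)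
  else ([::], [::]).

Lemma greedy_cat cur S : (greedy cur S).1 ++ unblock (greedy cur S).2 = S.
Proof.
by elim: S cur => //= p S IH cur; case: ifP => _ /=; rewrite ?unblock_cons IH.
Qed.

Lemma greedy_first_gap cur S : cur * B.+1 <= M ->
  (cur + acc_total (greedy cur S).1) * B.+1 <= M.
Proof.
elim: S cur => [|p S IH] cur /=; first by rewrite addn0.
case: ifP => light /= cur_light; last by rewrite addn0.
by rewrite /acc_total /= -/(acc_total _) addnA IH.
Qed.

Lemma greedy_gaps cur S : cur * B.+1 <= M ->
  all (fun b => acc_total b.2 * B.+1 <= M) (greedy cur S).2.
Proof.
elim: S cur => [|p S IH] cur //= cur_light.
case: ifP => light /=; first exact: IH.
by rewrite IH // andbT -[acc_total _]add0n greedy_first_gap.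
Qed.

Lemma greedy_size cur S :
  size (greedy cur S).2 * M.+1 <= B.+1 * (cur + acc_total S).
Proof.
elim: S cur => [|p S IH] cur //=.
rewrite /acc_total /= -/(acc_total _).
case: ifP => light /=; first by rewrite addnA IH.
have := IH 0; rewrite add0n; move/negbT: light; rewrite -ltnNge /=; nia.
Qed.

End Greedy.

Definition split_blocks B S := greedy B (acc_total S) 0 S.
Definition split_reps B S := map fst (split_blocks B S).2.
Definition split_gaps B S := (split_blocks B S).1 :: map snd (split_blocks B S).2.

Section Split.
Variables (B : nat) (S : seq entry).
Local Notation reps := (split_reps B S).
Local Notation gaps := (split_gaps B S).

Lemma split_cat : (split_blocks B S).1 ++ unblock (split_blocks B S).2 = S.
Proof. exact: greedy_cat. Qed.

Lemma size_split_gaps : size gaps = (size reps).+1.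
Proof. by rewrite /= !size_map. Qed.

Lemma split_gap_light g : g \in gaps -> acc_total g * B.+1 <= acc_total S.
Proof.
rewrite inE => /predU1P[->|/mapP[b b_in ->]].
  by rewrite -[acc_total _]add0n greedy_first_gap.
by move/allP: (greedy_gaps B (acc_total S) 0 S (leq0n _)) => /(_ b b_in).
Qed.

Lemma big_split_keys (F : entry -> nat) :
  \sum_(x <- S) F x = \sum_(r <- reps) F r + \sum_(g <- gaps) \sum_(x <- g) F x.
Proof. by rewrite -[in LHS]split_cat big_unblock big_map. Qed.

Lemma split_acc : acc_total S = acc_total reps + \sum_(g <- gaps) acc_total g.
Proof.
rewrite !acc_totalE big_split_keys; congr (_ + _).
by apply: eq_bigr => g _; rewrite acc_totalE.
Qed.

Lemma split_size : size S = size reps + \sum_(g <- gaps) size g.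
Proof.
rewrite -!sum1_size big_split_keys; congr (_ + _).
by apply: eq_bigr => g _; rewrite sum1_size.
Qed.

Lemma subseq_split_reps : subseq reps S.
Proof.
rewrite -[S in subseq _ S]split_cat.
exact: subseq_trans (subseq_unblock_reps _) (suffix_subseq _ _).
Qed.

Lemma subseq_split_gap g : g \in gaps -> subseq g S.
Proof. by rewrite -[S in subseq _ S]split_cat; apply: subseq_unblock_gap. Qed.

Lemma split_gap_keys j : sorted ltkey S -> j <= size reps ->
  gap_keys S reps j = nth [::] gaps j.
Proof.
move=> S_sorted; rewrite size_map -[S in gap_keys S]split_cat.
apply: gap_keys_unblock.
by rewrite split_cat -sorted_pairwise //; apply: ltkey_trans.
Qed.

Hypotheses (B_gt0 : 0 < B) (S_pos : positive_counts S) (S_neq0 : S != [::]).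

Lemma split_reps_size : 0 < size reps <= B.
Proof.
have acc_gt0 : 0 < acc_total S.
  by apply: leq_trans (size_le_acc_total S_pos); rewrite lt0n size_eq0.
have := greedy_size B (acc_total S) 0 S.
rewrite add0n -/(split_blocks B S) => count.
rewrite size_map; apply/andP; split; last by rewrite -ltnS; nia.
rewrite lt0n size_eq0; apply/eqP => no_reps.
have first_gap : (split_blocks B S).1 = S by rewrite -[RHS]split_cat no_reps cats0.
by have := @split_gap_light _ (mem_head _ _); rewrite first_gap; nia.
Qed.

Lemma split_gap_size g : g \in gaps -> size g < size S.
Proof.
move=> g_in; rewrite split_size (big_rem _ g_in) addnCA -[X in X < _]addn0.
by rewrite ltn_add2l addn_gt0; case/andP: split_reps_size => ->.
Qed.

End Split.

(* [size S] is enough fuel since every gap is shorter than [S]. *)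
Fixpoint build (B fuel : nat) (S : seq entry) : gsat :=
  if fuel is f.+1 then
    if S is [::] then GLeaf
    else GNode (split_reps B S) (map (build B f) (split_gaps B S))
  else GLeaf.

Section Build.
Variable B : nat.
Hypothesis B_gt0 : 0 < B.

Lemma build_node f S : S != [::] ->
  build B f.+1 S = GNode (split_reps B S) (map (build B f) (split_gaps B S)).
Proof. by case: S. Qed.

Lemma build_nil f : build B f [::] = GLeaf.
Proof. by case: f. Qed.

Lemma build_ind (P : seq entry -> gsat -> Prop) :
  P [::] GLeaf ->
  (forall f S, S != [::] -> size S <= f.+1 -> sorted ltkey S -> positive_counts S ->
     (forall g, g \in split_gaps B S ->
        [/\ size g <= f, sorted ltkey g, positive_counts g & P g (build B f g)]) ->
     P S (GNode (split_reps B S) (map (build B f) (split_gaps B S)))) ->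
  forall f S, size S <= f -> sorted ltkey S -> positive_counts S ->
  P S (build B f S).
Proof.
move=> P_nil P_node; elim=> [|f IH] S.
  by rewrite leqn0 size_eq0 => /eqP->.
have [->|S_neq0] := eqVneq S [::]; first by rewrite build_nil.
move=> S_size S_sorted S_pos; rewrite build_node //.
apply: P_node => // g g_in; have g_sub := subseq_split_gap _ _ _ g_in.
have g_size : size g <= f.
  by rewrite -ltnS (leq_trans (split_gap_size _ _ B_gt0 S_pos S_neq0 _ g_in)).
have g_sorted := subseq_sorted ltkey_trans g_sub S_sorted.
have g_pos := positive_counts_subseq g_sub S_pos.
by split => //; apply: IH.
Qed.

Lemma build_mass f S : size S <= f -> sorted ltkey S -> positive_counts S ->
  mass (build B f S) = acc_total S.
Proof.
move: f S; apply: (build_ind (fun S T => mass T = acc_total S)) => //.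
move=> f S _ _ _ _ children.
rewrite mass_node big_map (split_acc B S); congr (_ + _).
by apply: eq_big_seq => g /children[].
Qed.

Lemma build_nkeys f S : size S <= f -> sorted ltkey S -> positive_counts S ->
  nkeys (build B f S) = size S.
Proof.
move: f S; apply: (build_ind (fun S T => nkeys T = size S)) => //.
move=> f S _ _ _ _ children.
rewrite nkeys_node big_map (split_size B S); congr (_ + _).
by apply: eq_big_seq => g /children[].
Qed.

Lemma build_sabt f S : size S <= f -> sorted ltkey S -> positive_counts S ->
  is_sabt B (build B f S) S.
Proof.
move: f S; apply: (build_ind (fun S T => is_sabt B T S)) => //.
move=> f S S_neq0 _ S_sorted S_pos children.
apply: is_gsat_node.
  have reps_sub := subseq_split_reps B S.
  have /andP[reps_gt0 reps_le] := split_reps_size _ _ B_gt0 S_pos S_neq0.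
  split => //; last by rewrite size_map size_split_gaps.
  - exact: (subseq_sorted ltkey_trans reps_sub S_sorted).
  - by apply/allP => r /(mem_subseq reps_sub).
move=> i; rewrite size_map => i_lt.
rewrite (nth_map [::]) // split_gap_keys //; last by rewrite -ltnS -size_split_gaps.
by have [] := children _ (mem_nth [::] i_lt).
Qed.

Lemma build_ideal f S : size S <= f -> sorted ltkey S -> positive_counts S ->
  ideal (fun _ => B) (build B f S).
Proof.
move: f S; apply: (build_ind (fun S T => ideal (fun _ => B) T)) => //.
move=> f S S_neq0 S_size S_sorted S_pos children.
apply: ideal_node => i; rewrite size_map => i_lt.
have [g_size g_sorted g_pos ideal_g] := children _ (mem_nth [::] i_lt).
rewrite -build_node // build_mass // (nth_map [::]) // build_mass //.
by split => //; apply: split_gap_light; apply: mem_nth.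
Qed.

Lemma build_mem_le f S : size S <= f -> sorted ltkey S -> positive_counts S ->
  build_mem B (build B f S) <= (2 * B).+1 * size S.
Proof.
move: f S; apply: (build_ind
  (fun S T => build_mem B T <= (2 * B).+1 * size S)) => //.
move=> f S S_neq0 _ _ S_pos children.
rewrite build_mem_node big_map (split_size B S) mulnDr.
have /andP[reps_gt0 _] := split_reps_size _ _ B_gt0 S_pos S_neq0.
apply: leq_add; first by nia.
rewrite big_distrr /= big_seq [X in _ <= X]big_seq.
by apply: leq_sum => g /children[].
Qed.

Lemma build_depth_le f S : size S <= f -> sorted ltkey S -> positive_counts S ->
  depth (build B f S) <= (trunc_log B.+1 (acc_total S)).+1.
Proof.
move: f S; apply: (build_ind
  (fun S T => depth T <= (trunc_log B.+1 (acc_total S)).+1)) => //.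
move=> f S _ _ _ _ children; rewrite depth_node ltnS big_map.
apply/bigmax_leqP_seq => g g_in _.
have [_ _ g_pos depth_g] := children g g_in.
have [->|g_neq0] := eqVneq g [::]; first by rewrite build_nil.
apply: leq_trans depth_g _; apply: trunc_log_max => //.
rewrite expnSr; apply: leq_trans (split_gap_light _ _ _ g_in).
rewrite leq_mul2r trunc_logP ?orbT //.
by apply: leq_trans (size_le_acc_total g_pos); rewrite lt0n size_eq0.
Qed.

Lemma build_time_le_nlogn f S :
  size S <= f -> sorted ltkey S -> positive_counts S ->
  build_time B (build B f S) <= B * size S * (trunc_log 2 (size S) + 2).
Proof.
move: f S; apply: (build_ind
  (fun S T => build_time B T <= B * size S * (trunc_log 2 (size S) + 2))) => //.
move=> f S S_neq0 S_size S_sorted S_pos children.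
rewrite build_time_node -build_node // build_nkeys // big_map.
set L := trunc_log 2 (size S).
have children_le : \sum_(g <- split_gaps B S) build_time B (build B f g)
    <= B * (L + 2) * \sum_(g <- split_gaps B S) size g.
  rewrite big_distrr big_seq [X in _ <= X]big_seq; apply: leq_sum => g g_in.
  have [_ _ _ time_g] := children g g_in.
  apply: leq_trans time_g _; rewrite mulnAC leq_mul // leq_mul // leq_add2r.
  exact/leq_trunc_log/ltnW/(split_gap_size _ _ B_gt0 S_pos S_neq0 _ g_in).
have /andP[reps_gt0 reps_le] := split_reps_size _ _ B_gt0 S_pos S_neq0.
rewrite [in X in _ <= X](split_size B S); nia.
Qed.

Lemma build_time_le_linear f S :
  size S <= f -> sorted ltkey S -> positive_counts S ->
  build_time B (build B f S) + log_potential B (acc_total S) <= 6 * B * acc_total S.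
Proof.
move: f S; apply: (build_ind (fun S T =>
  build_time B T + log_potential B (acc_total S) <= 6 * B * acc_total S)) => //.
move=> f S S_neq0 S_size S_sorted S_pos children.
rewrite build_time_node -build_node // build_nkeys // big_map.
set M := acc_total S; set LM := trunc_log 2 M.
set r := acc_total (split_reps B S).
set X := \sum_(g <- split_gaps B S) acc_total g.
set R := \sum_(g <- split_gaps B S) log_potential B (acc_total g).
set T := \sum_(g <- split_gaps B S) build_time B (build B f g).
have M_eq : M = r + X by rewrite /M (split_acc B S).
have /andP[reps_gt0 reps_le] := split_reps_size _ _ B_gt0 S_pos S_neq0.
have r_ge : size (split_reps B S) <= r.
  apply/size_le_acc_total/(positive_counts_subseq (subseq_split_reps B S) S_pos).
have size_le_M : size S <= M by apply: size_le_acc_total.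
have M_gt0 : 0 < M by rewrite M_eq; lia.
have LM_le : LM <= M := trunc_log2_le M.
have children_le : T + R <= 6 * B * X.
  rewrite /T /R /X -big_split big_distrr big_seq [X in _ <= X]big_seq.
  by apply: leq_sum => g /children[].
have potential_le : 2 * B * LM * X <= M * R.
  rewrite /R /X !big_distrr big_seq [X in _ <= X]big_seq; apply: leq_sum => g g_in.
  exact/log_potential_light/split_gap_light.
have node_le : 2 * B * (LM + 2) <= 6 * B * r + R.
  by apply: (@potential_covers_node _ _ X); rewrite -?M_eq //; lia.
have pot_M : log_potential B M = B * (LM + 2) by rewrite /LM; case: (M) M_gt0.
have cost_le : size (split_reps B S) * (trunc_log 2 (size S)).+1 <= B * (LM + 1).
  by apply: leq_mul; rewrite // addn1 ltnS leq_trunc_log.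
rewrite pot_M M_eq; move: cost_le; move: (size _ * _) => c; lia.
Qed.

End Build.

Theorem theorem7 (B : nat) (hB : 1 <= B) :
  exists C : nat, forall S : seq entry,
    sorted ltkey S -> all (fun p => 0 < p.2) S ->
    let n := size S in
    let m := acc_total S in
    exists T : gsat,
      [/\ is_sabt B T S,
          ideal (fun _ => B) T,
          build_time B T <= C * minn (n * trunc_log 2 n) m + C,
          build_mem B T <= C * n + C &
          depth T <= C * trunc_log B.+1 m + C].
Proof.
exists (6 * B).+1 => S S_sorted S_pos /=; exists (build B (size S) S).
have time_lin := build_time_le_linear _ hB _ _ (leqnn _) S_sorted S_pos.
split.
- exact: build_sabt.
- exact: build_ideal.
- apply: leq_min_nlogn_linear; first exact: build_time_le_nlogn.
  exact: leq_trans (leq_addr _ _) time_lin.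
- by apply: leq_trans (build_mem_le _ hB _ _ (leqnn _) S_sorted S_pos) _; nia.
- by apply: leq_trans (build_depth_le _ hB _ _ (leqnn _) S_sorted S_pos) _; nia.
Qed.
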